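(* Let $\alpha>0$, $M>0$ and $0<\eta<1/2$. There exist $\varepsilon>0$ and $l\in\mathbb N$ such that: if $S\in\mathcal A(M,\varepsilon,\alpha)$ and $C_S$ is a minimal set of some $C^1$ diffeomorphism $f:S^1\to S^1$, then there exists $m_0=m_0(f)$ such that $\mathcal N(g_T)<\eta$ for every $m$-block $T$ with $m>m_0$, and whenever $T=\phi(j_1,\dots,j_m)(L)$ is an $m$-block with $m>m_0$ and $g_T\big(\phi(j_1,\dots,j_m,i_1,\dots,i_p)(J_i)\big)=J_j$ for some $1\le i,j\le k-1$ and $(i_1,\dots,i_p)$, then $0\le p\le l$.
   Context: Setting: $k\ge2$; $I_1,\dots,I_k$ pairwise disjoint compact intervals in $[0,1)$ ordered left to right; $L\subset[0,1)$ compact interval containing $I=I_1\cup\dots\cup I_k$; $S^1=\mathbb R/\mathbb Z\cong[0,1)$. $\mathcal S^{r}(I_1,\dots,I_k,L)$: $C^r$ maps $S:I\to L$ with $S(I_j)=L$ for all $j$ and $|S'|>1$; $C_S=\{x\in I:S^n(x)\in I\ \forall n\ge1\}$. For a $C^1$ map $F$ with nonvanishing derivative on an interval $T$, $\mathcal N(F)=\sup_{x,y\in T}\log\frac{|F'(x)|}{|F'(y)|}$; for $S$, $\mathcal N(S)=\max_j\sup_{x,y\in I_j}\log\frac{|S'(x)|}{|S'(y)|}$. $\mathcal A(M,\varepsilon,\alpha)$ is the set of $S\in\mathcal S^{1+\alpha}(I_1,\dots,I_k,L)$ with $\mathcal N(S)<\varepsilon$ and $|\log\frac{|S'(x)|}{|S'(y)|}|\le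 M|x-y|^\alpha$ for $x,y$ in a common $I_j$. Inverse branches $\phi_i=(S|_{I_i})^{-1}$, $\phi(i_1,\dots,i_m)=\phi_{i_1}\circ\dots\circ\phi_{i_m}$; $\phi(i_1,\dots,i_m)(L)$ is an $m$-block. $J_i$ ($1\le i\le k-1$) is the open interval between $I_i$ and $I_{i+1}$; $\phi(i_1,\dots,i_r)(J_i)$ is a gap of level $r$. A minimal set of $f$ is a nonempty closed invariant set in which every orbit is dense. For such $f$ and an $m$-block $T$, $u_T=\max\{n\in\mathbb N: S^{n-1}(f(T))\subset I\}$ and $g_T=S^{u_T}\circ f|_T$. *)

From Stdlib Require Import Reals Lra List.
Open Scope R_scope.

Definition has_deriv_within (D : R -> Prop) (f : R -> R) (x l : R) : Prop :=
  forall eps, 0 < eps -> exists delta, 0 < delta /\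
    forall y, D y -> y <> x -> Rabs (y - x) < delta ->
      Rabs ((f y - f x) / (y - x) - l) < eps.

Fixpoint iterR (n : nat) (f : R -> R) (x : R) : R :=
  match n with O => x | Datatypes.S n' => f (iterR n' f x) end.

(* I_j = [a j, b j], j = 1..k ;  L = [c, d] *)
Definition Ival (a b : nat -> R) (j : nat) (x : R) : Prop := a j <= x <= b j.
Definition Iset (k : nat) (a b : nat -> R) (x : R) : Prop :=
  exists j, (1 <= j <= k)%nat /\ Ival a b j x.
Definition Lset (c d : R) (x : R) : Prop := c <= x <= d.
Definition Jgap (a b : nat -> R) (i : nat) (x : R) : Prop := b i < x < a (i + 1)%nat.

Definition interval_config (k : nat) (a b : nat -> R) (c d : R) : Prop :=
  (2 <= k)%nat /\ 0 <= c /\ d < 1 /\ c <= a 1%nat /\ b k <= d /\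
  (forall j, (1 <= j <= k)%nat -> a j < b j) /\
  (forall j, (1 <= j < k)%nat -> b j < a (j + 1)%nat).

Definition in_class_S (k : nat) (a b : nat -> R) (c d alpha : R) (S Sd : R -> R) : Prop :=
  forall j, (1 <= j <= k)%nat ->
    (forall x, Ival a b j x -> has_deriv_within (Ival a b j) S x (Sd x)) /\
    (exists H, forall x y, Ival a b j x -> Ival a b j y ->
        Rabs (Sd x - Sd y) <= H * Rpower (Rabs (x - y)) alpha) /\
    (forall x, Ival a b j x -> Lset c d (S x)) /\
    (forall y, Lset c d y -> exists x, Ival a b j x /\ S x = y) /\
    (forall x, Ival a b j x -> 1 < Rabs (Sd x)).

Definition N_lt (D : R -> Prop) (Fd : R -> R) (e : R) : Prop :=
  exists e', e' < e /\
    forall x y, D x -> D y -> ln (Rabs (Fd x) / Rabs (Fd y)) <= e'.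

Definition in_class_A (k : nat) (a b : nat -> R) (c d M eps alpha : R) (S Sd : R -> R) : Prop :=
  in_class_S k a b c d alpha S Sd /\
  (forall j, (1 <= j <= k)%nat -> N_lt (Ival a b j) Sd eps) /\
  (forall j x y, (1 <= j <= k)%nat -> Ival a b j x -> Ival a b j y ->
     Rabs (ln (Rabs (Sd x) / Rabs (Sd y))) <= M * Rpower (Rabs (x - y)) alpha).

Definition C_S (k : nat) (a b : nat -> R) (S : R -> R) (x : R) : Prop :=
  Iset k a b x /\ forall n, (1 <= n)%nat -> Iset k a b (iterR n S x).

(* C^1 diffeomorphisms of S^1 = R/Z, given by a lift F with derivative Fd *)
Definition circle_diffeo_lift (F Fd : R -> R) : Prop :=
  (forall x, derivable_pt_lim F x (Fd x)) /\ continuity Fd /\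
  (forall x, Fd x <> 0) /\
  ((forall x, F (x + 1) = F x + 1) \/ (forall x, F (x + 1) = F x - 1)).

(* the induced map on S^1 = [0,1) *)
Definition circ_map (F : R -> R) (x : R) : R := frac_part (F x).

Definition cdist (x y : R) : R := Rmin (Rabs (x - y)) (1 - Rabs (x - y)).

Definition in_orbit (f : R -> R) (x y : R) : Prop :=
  exists n : nat, iterR n f x = y \/ iterR n f y = x.

Definition minimal_set (f : R -> R) (C : R -> Prop) : Prop :=
  (exists x, C x) /\
  (forall x, C x -> 0 <= x < 1) /\
  (forall x, 0 <= x < 1 ->
     (forall eps, 0 < eps -> exists y, C y /\ cdist x y < eps) -> C x) /\
  (forall x, C x -> C (f x)) /\
  (forall y, C y -> exists x, C x /\ f x = y) /\
  (forall x y, C x -> C y -> forall eps, 0 < eps ->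
     exists z, in_orbit f x z /\ cdist y z < eps).

Definition valid_word (k : nat) (w : list nat) : Prop :=
  Forall (fun i => (1 <= i <= k)%nat) w.

(* phi(i_1,...,i_m)(X) = phi_{i_1} o ... o phi_{i_m} (X), for X subset of L,
   phi_i = (S|_{I_i})^{-1} *)
Fixpoint phiset (a b : nat -> R) (S : R -> R) (w : list nat) (X : R -> Prop) : R -> Prop :=
  match w with
  | nil => X
  | cons i w' => fun x => Ival a b i x /\ phiset a b S w' X (S x)
  end.

Definition uT_cond (k : nat) (a b : nat -> R) (S f : R -> R) (T : R -> Prop) (n : nat) : Prop :=
  (1 <= n)%nat /\
  forall x, T x -> forall j, (j <= n - 1)%nat -> Iset k a b (iterR j S (f x)).

Definition is_uT (k : nat) (a b : nat -> R) (S f : R -> R) (T : R -> Prop) (u : nat) : Prop :=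
  uT_cond k a b S f T u /\ forall n, uT_cond k a b S f T n -> (n <= u)%nat.

Definition gT (S f : R -> R) (u : nat) (x : R) : R := iterR u S (f x).

Definition N_map_lt (D : R -> Prop) (g : R -> R) (e : R) : Prop :=
  exists gd, (forall x, D x -> has_deriv_within D g x (gd x) /\ gd x <> 0) /\ N_lt D gd e.

Definition maps_onto (g : R -> R) (X Y : R -> Prop) : Prop :=
  (forall x, X x -> Y (g x)) /\ (forall y, Y y -> exists x, X x /\ g x = y).

(* Let g > 0 be a lower bound for the gaps between consecutive intervals I_j
   and kappa = log(|L| / (|L| - g)).  Each branch of S maps an interval of
   length at most |L| - g onto L, so some |S'| on it is at least e^kappa; when
   N(S) < eps <= kappa/2 every |S'| is at least e^(kappa/2).  Hence S is
   uniformly expanding and an m-block has length at most e^(-m kappa/2).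
   Expansion together with the Hölder bound M|x - y|^alpha (and the bound eps
   on each term) gives the classical bounded distortion estimate: along orbits
   that follow common branches, log|(S^n)'| varies by at most A/(1 - theta),
   both for A = M and for A = sqrt(eps M), which is small when eps is.

   On a long block, f is C^1 and T is tiny,
   so f has distortion < eta/4, while S^u has distortion <= eta/2: this is
   N(g_T) < eta.  If g_T maps the gap phi(w v)(J_i) onto a gap J_j, then since
   S^|w| maps T onto L and g_T maps T into L, |g_T'| is at most a constant times
   |(S^|w|)'|, so phi(v)(J_i), of length at most e^(-|v| kappa/2), is bounded
   below in terms of g, and |v| is bounded. *)

From Stdlib Require Import Reals Lra Lia List ZArith.
From Coquelicot Require Coquelicot.
Open Scope R_scope.

Definition convex (A : R -> Prop) : Prop :=
  forall x y z, A x -> A y -> x <= z <= y -> A z.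

Definition cont_within (D : R -> Prop) (f : R -> R) (x : R) : Prop :=
  forall eps, 0 < eps -> exists delta, 0 < delta /\
    forall y, D y -> Rabs (y - x) < delta -> Rabs (f y - f x) < eps.

Lemma convex_between (A : R -> Prop) p q r : convex A -> A p -> A q ->
  Rmin p q <= r <= Rmax p q -> A r.
Proof.
  intros Hc Hp Hq. unfold Rmin, Rmax. destruct Rle_dec; intros Hr.
  - apply (Hc p q r); auto.
  - apply (Hc q p r); auto; lra.
Qed.

Lemma deriv_within_approx D f x l : has_deriv_within D f x l ->
  forall eps, 0 < eps -> exists delta, 0 < delta /\
    forall y, D y -> Rabs (y - x) < delta ->
      Rabs (f y - f x - l * (y - x)) <= eps * Rabs (y - x).
Proof.
  intros H eps He. destruct (H eps He) as [del [Hd Hy]]. exists del; split; auto.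
  intros y Dy Hyx. destruct (Req_dec y x) as [->|Hne].
  - replace (f x - f x - l * (x - x)) with 0 by ring.
    replace (x - x) with 0 by ring. rewrite Rabs_R0; lra.
  - specialize (Hy y Dy Hne Hyx).
    replace (f y - f x - l * (y - x)) with (((f y - f x) / (y - x) - l) * (y - x))
      by (field; lra).
    rewrite Rabs_mult. apply Rmult_le_compat_r; [apply Rabs_pos | lra].
Qed.

Lemma deriv_within_of_approx D f x l :
  (forall eps, 0 < eps -> exists delta, 0 < delta /\
    forall y, D y -> Rabs (y - x) < delta ->
      Rabs (f y - f x - l * (y - x)) <= eps * Rabs (y - x)) ->
  has_deriv_within D f x l.
Proof.
  intros H eps He. destruct (H (eps / 2) ltac:(lra)) as [del [Hd Hy]].
  exists del; split; auto.
  intros y Dy Hne Hyx. specialize (Hy y Dy Hyx).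
  assert (Ha : 0 < Rabs (y - x)) by (apply Rabs_pos_lt; lra).
  replace ((f y - f x) / (y - x) - l) with ((f y - f x - l * (y - x)) / (y - x))
    by (field; lra).
  unfold Rdiv. rewrite Rabs_mult, Rabs_inv.
  apply Rmult_lt_reg_r with (Rabs (y - x)); auto.
  rewrite Rmult_assoc, Rinv_l by lra. nra.
Qed.

Lemma deriv_within_lipschitz D f x l : has_deriv_within D f x l ->
  exists delta, 0 < delta /\ forall y, D y -> Rabs (y - x) < delta ->
    Rabs (f y - f x) <= (Rabs l + 1) * Rabs (y - x).
Proof.
  intros H. destruct (deriv_within_approx D f x l H 1 Rlt_0_1) as [del [Hd Hy]].
  exists del. split; auto. intros y Dy Hyx. specialize (Hy y Dy Hyx).
  replace (f y - f x) with ((f y - f x - l * (y - x)) + l * (y - x)) by ring.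
  eapply Rle_trans; [apply Rabs_triang|]. rewrite Rabs_mult. lra.
Qed.

Lemma deriv_within_cont D f x l : has_deriv_within D f x l -> cont_within D f x.
Proof.
  intros H eps He. destruct (deriv_within_lipschitz D f x l H) as [del [Hd Hy]].
  assert (Hl : 0 < Rabs l + 1) by (pose proof (Rabs_pos l); lra).
  exists (Rmin del (eps / (Rabs l + 1))). split.
  { apply Rmin_pos; auto. apply Rdiv_lt_0_compat; lra. }
  intros y Dy Hyx.
  assert (H1 : Rabs (y - x) < del) by (eapply Rlt_le_trans; [apply Hyx | apply Rmin_l]).
  assert (H2 : Rabs (y - x) < eps / (Rabs l + 1))
    by (eapply Rlt_le_trans; [apply Hyx | apply Rmin_r]).
  eapply Rle_lt_trans; [apply Hy; auto|].
  apply Rmult_lt_compat_l with (r := Rabs l + 1) in H2; auto.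
  replace ((Rabs l + 1) * (eps / (Rabs l + 1))) with eps in H2 by (field; lra).
  lra.
Qed.

Lemma deriv_within_ext D f g x l : (forall y, D y -> f y = g y) -> D x ->
  has_deriv_within D f x l -> has_deriv_within D g x l.
Proof.
  intros Hfg Dx H eps He. destruct (H eps He) as [del [Hd Hy]]. exists del; split; auto.
  intros y Dy Hne Hyx. rewrite <- (Hfg y Dy), <- (Hfg x Dx). auto.
Qed.

Lemma deriv_within_of_lim D f x l : derivable_pt_lim f x l -> has_deriv_within D f x l.
Proof.
  intros H eps He. destruct (H eps He) as [del Hy]. exists del; split; [apply cond_pos|].
  intros y Dy Hne Hyx. specialize (Hy (y - x) ltac:(lra) Hyx).
  replace (x + (y - x)) with y in Hy by ring. exact Hy.
Qed.

Lemma deriv_within_comp A B h g x hl gl : A x ->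
  has_deriv_within A h x hl -> has_deriv_within B g (h x) gl ->
  (forall y, A y -> B (h y)) ->
  has_deriv_within A (fun y => g (h y)) x (gl * hl).
Proof.
  intros Ax Hh Hg HAB. apply deriv_within_of_approx. intros eps He.
  set (K := Rabs hl + 1). set (Kg := Rabs gl + 1).
  assert (HK : 0 < K) by (unfold K; pose proof (Rabs_pos hl); lra).
  assert (HKg : 0 < Kg) by (unfold Kg; pose proof (Rabs_pos gl); lra).
  destruct (deriv_within_lipschitz _ _ _ _ Hh) as [d0 [Hd0 Hlip]].
  destruct (deriv_within_approx _ _ _ _ Hh (eps / (2 * Kg)) ltac:(apply Rdiv_lt_0_compat; lra))
    as [d2 [Hd2 Happh]].
  destruct (deriv_within_approx _ _ _ _ Hg (eps / (2 * K)) ltac:(apply Rdiv_lt_0_compat; lra))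
    as [d1 [Hd1 Happg]].
  exists (Rmin d0 (Rmin d2 (d1 / K))).
  split; [repeat apply Rmin_pos; auto; apply Rdiv_lt_0_compat; lra|].
  intros y Ay Hyx. set (r := Rabs (y - x)) in *. assert (Hr : 0 <= r) by apply Rabs_pos.
  assert (H0 : r < d0) by (eapply Rlt_le_trans; [apply Hyx | apply Rmin_l]).
  assert (H12 : r < Rmin d2 (d1 / K)) by (eapply Rlt_le_trans; [apply Hyx | apply Rmin_r]).
  assert (H2 : r < d2) by (eapply Rlt_le_trans; [apply H12 | apply Rmin_l]).
  assert (H1 : r * K < d1).
  { assert (r < d1 / K) by (eapply Rlt_le_trans; [apply H12 | apply Rmin_r]).
    apply Rmult_lt_compat_r with (r := K) in H; auto.
    replace (d1 / K * K) with d1 in H by (field; lra). auto. }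
  specialize (Hlip y Ay H0). fold K r in Hlip.
  specialize (Happh y Ay H2). fold r in Happh.
  specialize (Happg (h y) (HAB y Ay) ltac:(nra)).
  replace (g (h y) - g (h x) - gl * hl * (y - x)) with
    ((g (h y) - g (h x) - gl * (h y - h x)) + gl * (h y - h x - hl * (y - x))) by ring.
  eapply Rle_trans; [apply Rabs_triang|]. rewrite Rabs_mult.
  assert (Hg1 : eps / (2 * K) * Rabs (h y - h x) <= eps / 2 * r).
  { replace (eps / 2 * r) with (eps / (2 * K) * (K * r)) by (field; lra).
    apply Rmult_le_compat_l; [left; apply Rdiv_lt_0_compat | ]; lra. }
  assert (Hg2 : Rabs gl * Rabs (h y - h x - hl * (y - x)) <= eps / 2 * r).
  { eapply Rle_trans; [apply Rmult_le_compat_l; [apply Rabs_pos | apply Happh]|].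
    replace (eps / 2 * r) with (Kg * (eps / (2 * Kg) * r)) by (field; lra).
    assert (0 < eps / (2 * Kg)) by (apply Rdiv_lt_0_compat; lra).
    apply Rmult_le_compat_r; [nra | unfold Kg; lra]. }
  lra.
Qed.

Lemma cont_within_of_pt A f x : continuity_pt f x -> cont_within A f x.
Proof.
  intros H e He. unfold continuity_pt, continue_in, limit1_in, limit_in in H. simpl in H.
  destruct (H e He) as [del [Hd Hy]]. exists del; split; auto.
  intros y _ Hyx. unfold R_dist in Hy. destruct (Req_dec y x) as [->|Hne].
  - rewrite Rminus_diag, Rabs_R0; auto.
  - apply Hy. repeat split; auto.
Qed.

(* Clamping to [x, y] extends a function continuous on [x, y] to a function
   continuous on R; this reduces IVT and MVT on a convex set to the global ones. *)
Definition clamp (x y t : R) : R := Rmax x (Rmin y t).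

Lemma clamp_in x y t : x <= y -> x <= clamp x y t <= y.
Proof. intros. unfold clamp, Rmax, Rmin. repeat destruct Rle_dec; lra. Qed.

Lemma clamp_id x y t : x <= t <= y -> clamp x y t = t.
Proof. intros. unfold clamp, Rmax, Rmin. repeat destruct Rle_dec; lra. Qed.

Lemma clamp_lipschitz x y t s : x <= y -> Rabs (clamp x y t - clamp x y s) <= Rabs (t - s).
Proof.
  intros. unfold clamp, Rmax, Rmin. repeat destruct Rle_dec;
  unfold Rabs; repeat destruct Rcase_abs; lra.
Qed.

Lemma clamp_continuity (A : R -> Prop) x y h : x <= y ->
  (forall t, x <= t <= y -> A t) -> (forall t, A t -> cont_within A h t) ->
  continuity (fun t => h (clamp x y t)).
Proof.
  intros Hxy HA H t. unfold continuity_pt, continue_in, limit1_in, limit_in.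
  simpl. unfold R_dist. intros eps He.
  destruct (H (clamp x y t) (HA _ (clamp_in x y t Hxy)) eps He) as [del [Hd Hz]].
  exists del; split; auto. intros s [_ Hs]. apply Hz; [apply HA, clamp_in; auto |].
  eapply Rle_lt_trans; [apply clamp_lipschitz; auto | auto].
Qed.

Lemma IVT_within A h x y v : convex A -> A x -> A y ->
  (forall t, A t -> cont_within A h t) ->
  Rmin (h x) (h y) <= v <= Rmax (h x) (h y) ->
  exists z, Rmin x y <= z <= Rmax x y /\ A z /\ h z = v.
Proof.
  intros Hc Ax Ay Hh Hv.
  set (lo := Rmin x y). set (hi := Rmax x y).
  assert (Hx : lo <= x <= hi) by (unfold lo, hi, Rmin, Rmax; destruct Rle_dec; lra).
  assert (Hy : lo <= y <= hi) by (unfold lo, hi, Rmin, Rmax; destruct Rle_dec; lra).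
  assert (HA : forall z, lo <= z <= hi -> A z) by (intros z; apply convex_between; auto).
  destruct (Coquelicot.Continuity.IVT_gen _ x y v
              (clamp_continuity A lo hi h ltac:(lra) HA Hh)) as [z [Hz1 Hz2]].
  { rewrite !clamp_id by auto. auto. }
  exists z. rewrite clamp_id in Hz2 by auto. auto.
Qed.

Lemma MVT_within A h hd x y : convex A -> A x -> A y ->
  (forall z, A z -> has_deriv_within A h z (hd z)) ->
  exists z, Rmin x y <= z <= Rmax x y /\ A z /\ h y - h x = hd z * (y - x).
Proof.
  intros Hc Ax Ay Hh.
  set (lo := Rmin x y). set (hi := Rmax x y).
  assert (Hx : lo <= x <= hi) by (unfold lo, hi, Rmin, Rmax; destruct Rle_dec; lra).
  assert (Hy : lo <= y <= hi) by (unfold lo, hi, Rmin, Rmax; destruct Rle_dec; lra).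
  assert (HA : forall z, lo <= z <= hi -> A z) by (intros z; apply convex_between; auto).
  assert (Hcont := clamp_continuity A lo hi h ltac:(lra) HA
                     (fun t At => deriv_within_cont _ _ _ _ (Hh t At))).
  destruct (Coquelicot.Derive.MVT_gen (fun t => h (clamp lo hi t)) x y hd)
    as [z [Hz1 Hz2]].
  - fold lo hi. intros t Ht. apply Coquelicot.Derive.is_derive_Reals.
    intros eps He. destruct (Hh t (HA t ltac:(lra)) eps He) as [del [Hd Hyd]].
    assert (Hp : 0 < Rmin del (Rmin (t - lo) (hi - t)))
      by (apply Rmin_pos; auto; apply Rmin_pos; lra).
    exists (mkposreal _ Hp). simpl. intros e Hne He'.
    assert (H1 : Rabs e < del) by (eapply Rlt_le_trans; [apply He' | apply Rmin_l]).
    assert (H2 : Rabs e < Rmin (t - lo) (hi - t))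
      by (eapply Rlt_le_trans; [apply He' | apply Rmin_r]).
    assert (H3 : Rabs e < t - lo) by (eapply Rlt_le_trans; [apply H2 | apply Rmin_l]).
    assert (H4 : Rabs e < hi - t) by (eapply Rlt_le_trans; [apply H2 | apply Rmin_r]).
    assert (He2 : lo <= t + e <= hi) by (unfold Rabs in *; destruct Rcase_abs; lra).
    rewrite (clamp_id lo hi (t + e)), (clamp_id lo hi t) by lra.
    specialize (Hyd (t + e) (HA _ He2) ltac:(lra)). replace (t + e - t) with e in Hyd by ring.
    apply Hyd; auto.
  - intros t _. apply Hcont.
  - exists z. rewrite !clamp_id in Hz2 by auto. auto.
Qed.

Lemma no_interior_max (A : R -> Prop) h x y z : convex A ->
  (forall t, A t -> cont_within A h t) ->
  (forall p q, A p -> A q -> h p = h q -> p = q) -> A x -> A y -> x <= z <= y ->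
  h x < h z -> h y < h z -> False.
Proof.
  intros Hc Hcont Hinj Hx Hy Hz H1 H2.
  assert (HzA : A z) by (apply (Hc x y z); auto).
  set (v := (Rmax (h x) (h y) + h z) / 2).
  assert (Hv1 : h x < v < h z) by (unfold v, Rmax; destruct Rle_dec; lra).
  assert (Hv2 : h y < v < h z) by (unfold v, Rmax; destruct Rle_dec; lra).
  destruct (IVT_within A h x z v Hc Hx HzA Hcont) as [z1 [Hz1 [A1 E1]]].
  { unfold Rmin, Rmax; destruct Rle_dec; lra. }
  destruct (IVT_within A h z y v Hc HzA Hy Hcont) as [z2 [Hz2 [A2 E2]]].
  { unfold Rmin, Rmax; destruct Rle_dec; lra. }
  assert (z1 = z2) by (apply Hinj; congruence). subst z2.
  unfold Rmin, Rmax in Hz1, Hz2. repeat destruct Rle_dec; try lra.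
  assert (z1 = z) by lra. subst z1. lra.
Qed.

Lemma injective_cont_between (A : R -> Prop) h x y z : convex A ->
  (forall t, A t -> cont_within A h t) ->
  (forall p q, A p -> A q -> h p = h q -> p = q) -> A x -> A y -> x <= z <= y ->
  Rmin (h x) (h y) <= h z <= Rmax (h x) (h y).
Proof.
  intros Hc Hcont Hinj Hx Hy Hz.
  assert (Hopp : forall t, A t -> cont_within A (fun x => - h x) t).
  { intros t At e He. destruct (Hcont t At e He) as [del [Hd Hyd]].
    exists del; split; auto. intros y' Ay' Hyt.
    replace (- h y' - - h t) with (- (h y' - h t)) by ring. rewrite Rabs_Ropp. auto. }
  pose proof (Rmin_l (h x) (h y)). pose proof (Rmin_r (h x) (h y)).
  pose proof (Rmax_l (h x) (h y)). pose proof (Rmax_r (h x) (h y)).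
  split.
  - destruct (Rle_dec (Rmin (h x) (h y)) (h z)) as [|Hlt]; auto. exfalso.
    apply (no_interior_max A (fun t => - h t) x y z); auto.
    + intros p q Hp Hq E. apply Hinj; auto. lra.
    + unfold Rmin in Hlt; destruct Rle_dec; lra.
    + unfold Rmin in Hlt; destruct Rle_dec; lra.
  - destruct (Rle_dec (h z) (Rmax (h x) (h y))) as [|Hlt]; auto. exfalso.
    apply (no_interior_max A h x y z); auto.
    + unfold Rmax in Hlt; destruct Rle_dec; lra.
    + unfold Rmax in Hlt; destruct Rle_dec; lra.
Qed.

Lemma exp_le x y : x <= y -> exp x <= exp y.
Proof. intros [H|H]; [left; apply exp_increasing; auto | subst; lra]. Qed.

Lemma ln_le x y : 0 < x -> x <= y -> ln x <= ln y.
Proof. intros Hx [H|H]; [left; apply ln_increasing; auto | subst; lra]. Qed.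

Lemma ln_div x y : 0 < x -> 0 < y -> ln (x / y) = ln x - ln y.
Proof. intros. unfold Rdiv. rewrite ln_mult, ln_Rinv; auto. apply Rinv_0_lt_compat; auto. Qed.

Lemma le_exp_mul_of_ln p q B : 0 < p -> 0 < q -> ln p - ln q <= B -> p <= exp B * q.
Proof.
  intros Hp Hq H. assert (Hle : exp (ln p) <= exp (B + ln q)) by (apply exp_le; lra).
  rewrite exp_plus, !exp_ln in Hle by auto. exact Hle.
Qed.

Lemma exp_pow x n : exp x ^ n = exp (INR n * x).
Proof.
  induction n as [|n IH]; [simpl; rewrite Rmult_0_l, exp_0; auto|].
  rewrite S_INR. simpl. rewrite IH, <- exp_plus. f_equal. ring.
Qed.

Lemma nat_unbounded r : exists n : nat, r < INR n.
Proof.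
  destruct (archimed r) as [H1 _].
  destruct (Z_lt_le_dec (up r) 0) as [Hn|Hp].
  - exists 0%nat. simpl. apply IZR_lt in Hn. lra.
  - exists (Z.to_nat (up r)). rewrite INR_IZR_INZ, Z2Nat.id by lia. auto.
Qed.

Lemma exp_eventually_large K A : 0 < K -> 0 < A ->
  exists n0 : nat, forall n : nat, (n0 < n)%nat -> 1 < A * exp (INR n * K).
Proof.
  intros HK HA. destruct (nat_unbounded (ln (/ A) / K)) as [n0 Hn0].
  exists n0. intros n Hn. apply lt_INR in Hn.
  assert (Hl : ln (/ A) < INR n * K).
  { apply Rmult_lt_compat_r with (r := K) in Hn0; auto.
    replace (ln (/ A) / K * K) with (ln (/ A)) in Hn0 by (field; lra). nra. }
  apply exp_increasing in Hl. rewrite exp_ln in Hl by (apply Rinv_0_lt_compat; auto).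
  apply Rmult_lt_compat_l with (r := A) in Hl; auto. rewrite Rinv_r in Hl; lra.
Qed.

Lemma iter_shift (f : R -> R) n x : iterR (Datatypes.S n) f x = iterR n f (f x).
Proof. induction n as [|n IH]; simpl in *; auto. rewrite <- IH. reflexivity. Qed.

Fixpoint geo (t : R) (N : nat) : R :=
  match N with O => 0 | Datatypes.S N' => t ^ N' + geo t N' end.

Lemma geo_bound t N : 0 <= t < 1 -> geo t N <= / (1 - t).
Proof.
  intros Ht. assert (E : geo t N = (1 - t ^ N) / (1 - t)).
  { induction N as [|N IH]; simpl; [field; lra | rewrite IH; field; lra]. }
  rewrite E. unfold Rdiv. pattern (/ (1 - t)) at 2; rewrite <- Rmult_1_l.
  apply Rmult_le_compat_r; [left; apply Rinv_0_lt_compat; lra |].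
  pose proof (pow_le t N ltac:(lra)). lra.
Qed.

Section Configuration.

Variables (k : nat) (a b : nat -> R) (c d : R).
Hypothesis Hcfg : interval_config k a b c d.

Definition gap_bound (g : R) : Prop :=
  0 < g /\ forall j, (1 <= j < k)%nat -> b j + g <= a (j + 1)%nat.

Lemma gap_bound_exists : exists g, gap_bound g.
Proof.
  destruct Hcfg as [Hk [_ [_ [_ [_ [_ Hba]]]]]].
  assert (Hmin : forall n, exists m, 0 < m /\
            forall j, (1 <= j <= n)%nat -> (j < k)%nat -> m <= a (j + 1)%nat - b j).
  { induction n as [|n [m [Hm Hm']]].
    - exists 1. split; [lra | intros; lia].
    - destruct (Compare_dec.lt_dec (Datatypes.S n) k) as [Hn|Hn].
      + specialize (Hba (Datatypes.S n) ltac:(lia)).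
        exists (Rmin m (a (Datatypes.S n + 1)%nat - b (Datatypes.S n))).
        split; [apply Rmin_pos; lra |].
        intros j Hj Hjk. destruct (Nat.eq_dec j (Datatypes.S n)) as [->|Hne]; [apply Rmin_r|].
        eapply Rle_trans; [apply Rmin_l | apply Hm'; lia].
      + exists m. split; auto. intros j Hj Hjk. apply Hm'; lia. }
  destruct (Hmin k) as [m [Hm Hj]]. exists m. split; auto.
  intros j Hjk. specialize (Hj j ltac:(lia) ltac:(lia)). lra.
Qed.

Variable g : R.
Hypothesis Hg : gap_bound g.

Lemma gap_ordered i j : (1 <= i)%nat -> (i < j)%nat -> (j <= k)%nat -> b i + g <= a j.
Proof.
  destruct Hcfg as [_ [_ [_ [_ [_ [Hab _]]]]]]. destruct Hg as [Hg0 Hgj].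
  intros Hi Hij Hjk. induction j as [|j IH]; [lia|].
  replace (Datatypes.S j) with (j + 1)%nat by lia.
  destruct (Nat.eq_dec i j) as [->|Hne]; [apply Hgj; lia|].
  specialize (IH ltac:(lia) ltac:(lia)). specialize (Hab j ltac:(lia)).
  specialize (Hgj j ltac:(lia)). lra.
Qed.

Lemma interval_in_L j : (1 <= j <= k)%nat -> c <= a j /\ b j <= d.
Proof.
  destruct Hcfg as [Hk [_ [_ [Hca [Hbd [Hab _]]]]]]. destruct Hg as [Hg0 _].
  intros Hj. split.
  - destruct (Nat.eq_dec j 1) as [->|Hne]; auto.
    pose proof (gap_ordered 1 j ltac:(lia) ltac:(lia) ltac:(lia)).
    specialize (Hab 1%nat ltac:(lia)). lra.
  - destruct (Nat.eq_dec j k) as [->|Hne]; auto.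
    pose proof (gap_ordered j k ltac:(lia) ltac:(lia) ltac:(lia)).
    specialize (Hab k ltac:(lia)). lra.
Qed.

(* Each I_j misses a gap of length g, so |I_j| <= |L| - g. *)
Lemma interval_length j : (1 <= j <= k)%nat -> b j - a j <= d - c - g.
Proof.
  destruct Hcfg as [Hk [_ [_ [Hca [Hbd [Hab _]]]]]]. intros Hj.
  destruct (Nat.eq_dec j k) as [->|Hne].
  - pose proof (gap_ordered 1 k ltac:(lia) ltac:(lia) ltac:(lia)).
    pose proof (Hab 1%nat ltac:(lia)). lra.
  - pose proof (gap_ordered j k ltac:(lia) ltac:(lia) ltac:(lia)).
    pose proof (interval_in_L j Hj). pose proof (Hab k ltac:(lia)). lra.
Qed.

Lemma L_longer_than_gap : 0 < d - c - g.
Proof.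
  destruct Hcfg as [Hk [_ [_ [_ [_ [Hab _]]]]]].
  pose proof (interval_length 1 ltac:(lia)). specialize (Hab 1%nat ltac:(lia)). lra.
Qed.

Lemma L_nondegenerate : c < d.
Proof. pose proof L_longer_than_gap. destruct Hg as [Hg0 _]. lra. Qed.

Lemma Ival_L j x : (1 <= j <= k)%nat -> Ival a b j x -> Lset c d x.
Proof. intros Hj Hx. pose proof (interval_in_L j Hj). unfold Ival, Lset in *. lra. Qed.

Lemma Iset_L x : Iset k a b x -> Lset c d x.
Proof. intros [j [Hj Hx]]. apply (Ival_L j); auto. Qed.

Lemma Jgap_L i x : (1 <= i <= k - 1)%nat -> Jgap a b i x -> Lset c d x.
Proof.
  destruct Hcfg as [Hk [_ [_ [_ [_ [Hab _]]]]]]. intros Hi Hx.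
  pose proof (interval_in_L i ltac:(lia)). pose proof (interval_in_L (i + 1) ltac:(lia)).
  pose proof (Hab i ltac:(lia)). pose proof (Hab (i + 1)%nat ltac:(lia)).
  unfold Jgap, Lset in *. lra.
Qed.

Lemma Jgap_not_I i x : (1 <= i <= k - 1)%nat -> Jgap a b i x -> ~ Iset k a b x.
Proof.
  destruct Hcfg as [Hk [_ [_ [_ [_ [Hab _]]]]]]. destruct Hg as [Hg0 _].
  intros Hi Hx [j [Hj Hxj]]. unfold Jgap, Ival in *.
  destruct (Compare_dec.le_lt_dec j i).
  - destruct (Nat.eq_dec j i) as [->|]; [lra|].
    pose proof (gap_ordered j i ltac:(lia) ltac:(lia) ltac:(lia)).
    pose proof (Hab i ltac:(lia)). lra.
  - destruct (Nat.eq_dec j (i + 1)) as [->|]; [lra|].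
    pose proof (gap_ordered (i + 1) j ltac:(lia) ltac:(lia) ltac:(lia)).
    pose proof (Hab (i + 1)%nat ltac:(lia)). lra.
Qed.

Lemma close_same_interval i j x y : (1 <= i <= k)%nat -> (1 <= j <= k)%nat ->
  Ival a b i x -> Ival a b j y -> Rabs (y - x) < g -> i = j.
Proof.
  intros Hi Hj Hx Hy Hxy. unfold Ival in *.
  destruct (Nat.lt_total i j) as [H|[H|H]]; auto; exfalso.
  - pose proof (gap_ordered i j ltac:(lia) H ltac:(lia)).
    unfold Rabs in Hxy; destruct Rcase_abs; lra.
  - pose proof (gap_ordered j i ltac:(lia) H ltac:(lia)).
    unfold Rabs in Hxy; destruct Rcase_abs; lra.
Qed.

End Configuration.

Lemma Ival_convex a b j : convex (Ival a b j).
Proof. intros x y z Hx Hy Hz. unfold Ival in *. lra. Qed.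

Lemma Lset_convex c d : convex (Lset c d).
Proof. intros x y z Hx Hy Hz. unfold Lset in *. lra. Qed.

Definition same_branch (k : nat) (a b : nat -> R) (p q : R) : Prop :=
  exists j, (1 <= j <= k)%nat /\ Ival a b j p /\ Ival a b j q.

(* kappa = log(|L|/(|L|-g)): each branch of S has a derivative at least e^kappa
   somewhere; theta < 1 is the contraction rate of the distortion estimate. *)
Definition kappa (c d g : R) : R := ln ((d - c) / (d - c - g)).
Definition theta (alpha c d g : R) : R := exp (- (alpha * (kappa c d g / 2) / 2)).

Fixpoint deriv_iter (S Sd : R -> R) (N : nat) (z : R) : R :=
  match N with O => 1 | Datatypes.S N' => deriv_iter S Sd N' (S z) * Sd z end.
Fixpoint log_deriv_sum (S Sd : R -> R) (N : nat) (z : R) : R :=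
  match N with O => 0 | Datatypes.S N' => ln (Rabs (Sd z)) + log_deriv_sum S Sd N' (S z) end.

Lemma deriv_iter_log S Sd N : forall z, (forall n, (n < N)%nat -> Sd (iterR n S z) <> 0) ->
  deriv_iter S Sd N z <> 0 /\ ln (Rabs (deriv_iter S Sd N z)) = log_deriv_sum S Sd N z.
Proof.
  induction N as [|N IH]; intros z H; simpl.
  - rewrite Rabs_R1, ln_1. split; [lra | auto].
  - destruct (IH (S z)) as [H1 H2].
    { intros n Hn. rewrite <- iter_shift. apply H. lia. }
    pose proof (H 0%nat ltac:(lia)) as H0. simpl in H0.
    split; [apply Rmult_integral_contrapositive; auto|].
    rewrite Rabs_mult, ln_mult, H2 by (apply Rabs_pos_lt; auto). ring.
Qed.

Lemma le_sqrt_mult t x y : 0 <= t -> t <= x -> t <= y -> t <= sqrt (x * y).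
Proof.
  intros Ht Hx Hy. rewrite <- (sqrt_square t) by auto.
  apply sqrt_le_1_alt. apply Rmult_le_compat; auto.
Qed.

Section ExpansionDistortion.

Variables (k : nat) (a b : nat -> R) (c d : R).
Hypothesis Hcfg : interval_config k a b c d.
Variable g : R.
Hypothesis Hg : gap_bound k a b g.
Variables (M eps alpha : R) (S Sd : R -> R).
Hypothesis HA : in_class_A k a b c d M eps alpha S Sd.
Hypothesis Heps : eps <= kappa c d g / 2.

Lemma kappa_pos : 0 < kappa c d g.
Proof.
  pose proof (L_longer_than_gap k a b c d Hcfg g Hg). destruct Hg as [Hg0 _].
  unfold kappa. rewrite <- ln_1. apply ln_increasing; [lra|].
  apply Rmult_lt_reg_r with (d - c - g); auto.
  unfold Rdiv. rewrite Rmult_assoc, Rinv_l by lra. lra.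
Qed.

Lemma theta_bounds : 0 < alpha -> 0 < theta alpha c d g < 1.
Proof.
  intros Ha. pose proof kappa_pos. unfold theta. split; [apply exp_pos|].
  rewrite <- exp_0. apply exp_increasing. assert (0 < alpha * kappa c d g) by nra. lra.
Qed.

Lemma S_deriv_ne0 x : Iset k a b x -> Sd x <> 0.
Proof.
  intros [j [Hj Hx]]. destruct HA as [HS _]. destruct (HS j Hj) as [_ [_ [_ [_ Hgt]]]].
  pose proof (Hgt x Hx). intros E. rewrite E, Rabs_R0 in *. lra.
Qed.

(* The branches are g-separated, so Sd is the derivative of S within all of I. *)
Lemma S_deriv_on_I x : Iset k a b x -> has_deriv_within (Iset k a b) S x (Sd x).
Proof.
  intros [j [Hj Hx]]. destruct HA as [HS _]. destruct (HS j Hj) as [Hder _].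
  intros e He. destruct (Hder x Hx e He) as [del [Hdel Hy]]. destruct Hg as [Hg0 _].
  exists (Rmin del g). split; [apply Rmin_pos; auto|].
  intros y [j' [Hj' Hy']] Hne Hyx.
  assert (j' = j).
  { symmetry. apply (close_same_interval k a b c d Hcfg g Hg j j' x y); auto.
    eapply Rlt_le_trans; [apply Hyx | apply Rmin_r]. }
  subst j'. apply Hy; auto. eapply Rlt_le_trans; [apply Hyx | apply Rmin_l].
Qed.

(* Since S maps I_j (of length <= |L| - g) onto L, some |Sd| on I_j is at least
   e^kappa; as N(S) < eps <= kappa/2, every |Sd| is at least e^(kappa/2). *)
Lemma S_deriv_large j x : (1 <= j <= k)%nat -> Ival a b j x ->
  exp (kappa c d g / 2) <= Rabs (Sd x).
Proof.
  intros Hj Hx. pose proof HA as [HS [HN _]].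
  destruct (HS j Hj) as [Hder [_ [_ [Hsurj Hgt]]]].
  pose proof (L_longer_than_gap k a b c d Hcfg g Hg) as Hcdg. destruct Hg as [Hg0 _].
  destruct (Hsurj c ltac:(unfold Lset; lra)) as [xc [Hxc Exc]].
  destruct (Hsurj d ltac:(unfold Lset; lra)) as [xd [Hxd Exd]].
  destruct (MVT_within (Ival a b j) S Sd xc xd (Ival_convex a b j) Hxc Hxd Hder)
    as [z [_ [Hz Ez]]].
  rewrite Exc, Exd in Ez. pose proof (interval_length k a b c d Hcfg g Hg j Hj).
  assert (Hxx : Rabs (xd - xc) <= d - c - g)
    by (unfold Ival in *; unfold Rabs; destruct Rcase_abs; lra).
  assert (Hsz : (d - c) / (d - c - g) <= Rabs (Sd z)).
  { apply Rmult_le_reg_r with (d - c - g); auto. unfold Rdiv.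
    rewrite Rmult_assoc, Rinv_l, Rmult_1_r by lra.
    assert (E1 : d - c = Rabs (Sd z) * Rabs (xd - xc))
      by (rewrite <- Rabs_mult, <- Ez, Rabs_right; lra).
    pose proof (Rabs_pos (Sd z)).
    assert (Rabs (Sd z) * Rabs (xd - xc) <= Rabs (Sd z) * (d - c - g))
      by (apply Rmult_le_compat_l; auto).
    lra. }
  destruct (HN j Hj) as [e' [He' Hle]]. specialize (Hle z x Hz Hx).
  pose proof (Hgt z Hz). pose proof (Hgt x Hx).
  rewrite ln_div in Hle by lra.
  assert (kappa c d g <= ln (Rabs (Sd z)))
    by (unfold kappa; apply ln_le; auto; apply Rdiv_lt_0_compat; lra).
  rewrite <- (exp_ln (Rabs (Sd x))) by lra. apply exp_le. lra.
Qed.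

Lemma S_expands p q : same_branch k a b p q ->
  Rabs (p - q) * exp (kappa c d g / 2) <= Rabs (S p - S q).
Proof.
  intros [j [Hj [Hp Hq]]]. pose proof HA as [HS _]. destruct (HS j Hj) as [Hder _].
  destruct (MVT_within (Ival a b j) S Sd q p (Ival_convex a b j) Hq Hp Hder)
    as [z [_ [Hz Ez]]].
  rewrite Ez, Rabs_mult, Rmult_comm. apply Rmult_le_compat_r; [apply Rabs_pos|].
  apply (S_deriv_large j); auto.
Qed.

Lemma S_iter_expands N p q :
  (forall n, (n < N)%nat -> same_branch k a b (iterR n S p) (iterR n S q)) ->
  Rabs (p - q) * exp (INR N * (kappa c d g / 2)) <= Rabs (iterR N S p - iterR N S q).
Proof.
  revert p q. induction N as [|N IH]; intros p q H.
  - simpl. rewrite Rmult_0_l, exp_0. lra.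
  - rewrite !iter_shift, S_INR.
    replace ((INR N + 1) * (kappa c d g / 2))
      with (kappa c d g / 2 + INR N * (kappa c d g / 2)) by ring.
    rewrite exp_plus, <- Rmult_assoc.
    eapply Rle_trans; [| apply IH].
    + apply Rmult_le_compat_r; [left; apply exp_pos|]. apply S_expands, (H 0%nat). lia.
    + intros n Hn. rewrite <- !iter_shift. apply H. lia.
Qed.

(* If n more steps along the same branches keep p, q inside L, then
   |p - q| e^((n+1) kappa/2) <= 1, since L has length < 1. *)
Lemma orbit_pair_close N p q :
  (forall n, (n < Datatypes.S N)%nat -> same_branch k a b (iterR n S p) (iterR n S q)) ->
  Rabs (p - q) * exp (INR (Datatypes.S N) * (kappa c d g / 2)) <= 1.
Proof.
  intros H. eapply Rle_trans; [apply S_iter_expands; auto|].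
  destruct (H N ltac:(lia)) as [j [Hj [Hp Hq]]].
  pose proof HA as [HS _]. destruct (HS j Hj) as [_ [_ [Hmap _]]].
  pose proof (Hmap _ Hp). pose proof (Hmap _ Hq).
  rewrite !iter_shift, <- !iter_shift. simpl.
  destruct Hcfg as [_ [Hc0 [Hd1 _]]]. unfold Lset in *. apply Rabs_le; lra.
Qed.

Lemma log_deriv_diff_bounds p q : same_branch k a b p q ->
  Rabs (ln (Rabs (Sd p)) - ln (Rabs (Sd q))) < eps /\
  Rabs (ln (Rabs (Sd p)) - ln (Rabs (Sd q))) <= M * Rpower (Rabs (p - q)) alpha.
Proof.
  destruct HA as [HS [HN HM]]. intros [j [Hj [Hp Hq]]].
  destruct (HS j Hj) as [_ [_ [_ [_ Hgt]]]]. pose proof (Hgt p Hp). pose proof (Hgt q Hq).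
  split.
  - destruct (HN j Hj) as [e' [He' Hle]].
    pose proof (Hle p q Hp Hq). pose proof (Hle q p Hq Hp).
    rewrite ln_div in * by lra. apply Rabs_def1; lra.
  - rewrite <- ln_div by lra. apply (HM j); auto.
Qed.

(* Hölder continuity turns the expansion bound into geometric decay. *)
Lemma log_deriv_diff_decay p q N : 0 < alpha -> 0 <= M -> same_branch k a b p q ->
  Rabs (p - q) * exp (INR (Datatypes.S N) * (kappa c d g / 2)) <= 1 ->
  Rabs (ln (Rabs (Sd p)) - ln (Rabs (Sd q))) <= M * (theta alpha c d g ^ N) ^ 2.
Proof.
  intros Ha HM Hpq Hr. pose proof kappa_pos as Hk.
  assert (0 < theta alpha c d g ^ N) by (apply pow_lt, exp_pos).
  destruct (log_deriv_diff_bounds p q Hpq) as [_ Hhol].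
  destruct (Req_dec p q) as [->|Hne].
  { rewrite Rminus_diag, Rabs_R0. nra. }
  eapply Rle_trans; [apply Hhol|]. apply Rmult_le_compat_l; [lra|].
  assert (Hr0 : 0 < Rabs (p - q)) by (apply Rabs_pos_lt; lra).
  unfold theta. rewrite <- pow_mult, exp_pow. unfold Rpower. apply exp_le.
  assert (Hl : ln (Rabs (p - q)) <= - (INR (Datatypes.S N) * (kappa c d g / 2))).
  { rewrite <- (ln_exp (- (INR (Datatypes.S N) * (kappa c d g / 2)))).
    apply ln_le; auto. rewrite exp_Ropp.
    apply Rmult_le_reg_r with (exp (INR (Datatypes.S N) * (kappa c d g / 2)));
      [apply exp_pos|].
    rewrite Rinv_l; [lra|]. apply Rgt_not_eq, exp_pos. }
  rewrite S_INR in Hl. rewrite mult_INR. simpl (INR 2). pose proof (pos_INR N). nra.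
Qed.

Lemma distortion_geometric A N p q :
  (forall n N', same_branch k a b (iterR n S p) (iterR n S q) ->
     Rabs (iterR n S p - iterR n S q) * exp (INR (Datatypes.S N') * (kappa c d g / 2)) <= 1 ->
     Rabs (ln (Rabs (Sd (iterR n S p))) - ln (Rabs (Sd (iterR n S q))))
       <= A * theta alpha c d g ^ N') ->
  (forall n, (n < N)%nat -> same_branch k a b (iterR n S p) (iterR n S q)) ->
  Rabs (log_deriv_sum S Sd N p - log_deriv_sum S Sd N q) <= A * geo (theta alpha c d g) N.
Proof.
  revert p q. induction N as [|N IH]; intros p q HT H; simpl.
  - rewrite Rminus_0_r, Rabs_R0. lra.
  - replace (ln (Rabs (Sd p)) + log_deriv_sum S Sd N (S p)
             - (ln (Rabs (Sd q)) + log_deriv_sum S Sd N (S q)))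
      with ((ln (Rabs (Sd p)) - ln (Rabs (Sd q)))
            + (log_deriv_sum S Sd N (S p) - log_deriv_sum S Sd N (S q))) by ring.
    eapply Rle_trans; [apply Rabs_triang|]. rewrite Rmult_plus_distr_l.
    apply Rplus_le_compat.
    + apply (HT 0%nat N); [apply (H 0%nat); lia|]. apply orbit_pair_close. auto.
    + apply IH.
      * intros n N' Hb Hr. rewrite <- !iter_shift. apply HT; rewrite !iter_shift; auto.
      * intros n Hn. rewrite <- !iter_shift. apply H. lia.
Qed.

Lemma distortion_M N p q : 0 < alpha -> 0 < M ->
  (forall n, (n < N)%nat -> same_branch k a b (iterR n S p) (iterR n S q)) ->
  Rabs (log_deriv_sum S Sd N p - log_deriv_sum S Sd N q) <= M / (1 - theta alpha c d g).
Proof.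
  intros Ha HM H. pose proof (theta_bounds Ha) as Hth.
  eapply Rle_trans; [apply distortion_geometric with (A := M); auto|].
  - intros n N' Hb Hr. eapply Rle_trans; [apply (log_deriv_diff_decay _ _ N'); auto; lra|].
    apply Rmult_le_compat_l; [lra|].
    assert (0 < theta alpha c d g ^ N') by (apply pow_lt; lra).
    assert (theta alpha c d g ^ N' <= 1) by (rewrite <- (pow1 N'); apply pow_incr; lra).
    simpl. nra.
  - apply Rmult_le_compat_l; [lra | apply geo_bound; lra].
Qed.

Lemma distortion_small N p q : 0 < alpha -> 0 < M -> 0 < eps ->
  (forall n, (n < N)%nat -> same_branch k a b (iterR n S p) (iterR n S q)) ->
  Rabs (log_deriv_sum S Sd N p - log_deriv_sum S Sd N q)
    <= sqrt (eps * M) / (1 - theta alpha c d g).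
Proof.
  intros Ha HM He H. pose proof (theta_bounds Ha) as Hth.
  eapply Rle_trans; [apply distortion_geometric with (A := sqrt (eps * M)); auto|].
  - intros n N' Hb Hr.
    assert (Ht : 0 <= theta alpha c d g ^ N') by (apply pow_le; lra).
    replace (sqrt (eps * M) * theta alpha c d g ^ N')
      with (sqrt (eps * (M * (theta alpha c d g ^ N') ^ 2))).
    + apply le_sqrt_mult; [apply Rabs_pos | left; apply log_deriv_diff_bounds; auto |].
      apply (log_deriv_diff_decay _ _ N'); auto; lra.
    + rewrite <- Rmult_assoc, sqrt_mult, sqrt_pow2 by (try apply pow2_ge_0; nra). auto.
  - apply Rmult_le_compat_l; [apply sqrt_pos | apply geo_bound; lra].
Qed.

Lemma iter_deriv_within N (A : R -> Prop) h hd :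
  (forall x, A x -> has_deriv_within A h x (hd x)) ->
  (forall n x, (n < N)%nat -> A x -> Iset k a b (iterR n S (h x))) ->
  forall x, A x ->
  has_deriv_within A (fun y => iterR N S (h y)) x (deriv_iter S Sd N (h x) * hd x).
Proof.
  revert h hd. induction N as [|N IH]; intros h hd Hh HI x Ax.
  - simpl. rewrite Rmult_1_l. auto.
  - apply deriv_within_ext with (fun y => iterR N S (S (h y)));
      [intros y _; rewrite iter_shift; auto | auto |].
    replace (deriv_iter S Sd (Datatypes.S N) (h x) * hd x)
      with (deriv_iter S Sd N (S (h x)) * (Sd (h x) * hd x)) by (simpl; ring).
    apply (IH (fun y => S (h y)) (fun y => Sd (h y) * hd y)); auto.
    + intros y Ay. apply deriv_within_comp with (Iset k a b); auto.
      * apply S_deriv_on_I. apply (HI 0%nat y); auto. lia.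
      * intros z Az. apply (HI 0%nat z); auto. lia.
    + intros n y Hn Ay. rewrite <- iter_shift. apply HI; auto. lia.
Qed.

(* S is injective and continuous on each I_j, hence monotone there. *)
Lemma S_between j x y z : (1 <= j <= k)%nat -> Ival a b j x -> Ival a b j y ->
  x <= z <= y -> Rmin (S x) (S y) <= S z <= Rmax (S x) (S y).
Proof.
  intros Hj Hx Hy Hz. pose proof HA as [HS _]. destruct (HS j Hj) as [Hder _].
  pose proof kappa_pos.
  apply (injective_cont_between (Ival a b j)); auto; [apply Ival_convex | |].
  - intros t Ht. eapply deriv_within_cont. apply Hder; auto.
  - intros p q Hp Hq E.
    pose proof (S_expands p q ltac:(exists j; auto)) as H1.
    rewrite E, Rminus_diag, Rabs_R0 in H1.
    pose proof (exp_pos (kappa c d g / 2)). pose proof (Rabs_pos (p - q)).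
    destruct (Req_dec p q) as [|Hne]; auto. exfalso.
    assert (0 < Rabs (p - q)) by (apply Rabs_pos_lt; lra). nra.
Qed.

End ExpansionDistortion.

(* Blocks phi(w)(X): points whose S-itinerary follows the word w and then
   lands in X. *)

Lemma phiset_app a b S w v X x :
  phiset a b S (w ++ v) X x <-> phiset a b S w (phiset a b S v X) x.
Proof.
  revert x. induction w as [|i w IH]; intros x; simpl; [tauto|]. rewrite IH. tauto.
Qed.

Lemma phiset_mono a b S w (X Y : R -> Prop) x : (forall y, X y -> Y y) ->
  phiset a b S w X x -> phiset a b S w Y x.
Proof.
  revert x. induction w as [|i w IH]; intros x H; simpl; auto. intros [H1 H2]. split; auto.
Qed.

Lemma block_itinerary k a b S w X x : valid_word k w -> phiset a b S w X x ->
  (forall n, (n < length w)%nat ->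
     (1 <= nth n w 0 <= k)%nat /\ Ival a b (nth n w 0%nat) (iterR n S x)) /\
  X (iterR (length w) S x).
Proof.
  revert x. induction w as [|i w IH]; intros x Hv H; cbn [length nth phiset] in *.
  - split; auto. intros n Hn; lia.
  - inversion Hv as [|i' w' Hi Hw]; subst. destruct H as [H1 H2].
    destruct (IH (S x) Hw H2) as [IH1 IH2]. split; [| rewrite iter_shift; auto].
    intros [|n] Hn; cbn [nth]; [split; auto|]. rewrite iter_shift. apply IH1. lia.
Qed.

Lemma block_same_branch k a b S w X x y : valid_word k w ->
  phiset a b S w X x -> phiset a b S w X y ->
  forall n, (n < length w)%nat -> same_branch k a b (iterR n S x) (iterR n S y).
Proof.
  intros Hv Hx Hy n Hn. exists (nth n w 0%nat).
  destruct (block_itinerary k a b S w X x Hv Hx) as [Ix _].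
  destruct (block_itinerary k a b S w X y Hv Hy) as [Iy _].
  destruct (Ix n Hn), (Iy n Hn). auto.
Qed.

Section Blocks.

Variables (k : nat) (a b : nat -> R) (c d : R).
Hypothesis Hcfg : interval_config k a b c d.
Variable g : R.
Hypothesis Hg : gap_bound k a b g.
Variables (M eps alpha : R) (S Sd : R -> R).
Hypothesis HA : in_class_A k a b c d M eps alpha S Sd.
Hypothesis Heps : eps <= kappa c d g / 2.

Lemma block_in_L w (X : R -> Prop) x : valid_word k w ->
  (forall y, X y -> Lset c d y) -> phiset a b S w X x -> Lset c d x.
Proof.
  intros Hv HX. destruct w as [|i w]; simpl; auto.
  intros [H1 _]. inversion Hv; subst. apply (Ival_L k a b c d Hcfg g Hg i); auto.
Qed.

Lemma block_onto w (X : R -> Prop) : valid_word k w ->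
  (forall y, X y -> Lset c d y) -> forall y, X y ->
  exists x, phiset a b S w X x /\ iterR (length w) S x = y.
Proof.
  induction w as [|i w IH]; intros Hv HX y Hy; cbn [length phiset]; [exists y; auto|].
  inversion Hv as [|i' w' Hi Hw]; subst. destruct (IH Hw HX y Hy) as [x' [Hx' Ex']].
  pose proof HA as [HS _]. destruct (HS i Hi) as [_ [_ [_ [Hsurj _]]]].
  destruct (Hsurj x' (block_in_L w X x' Hw HX Hx')) as [x [Hx Ex]].
  exists x. split; [split; [| rewrite Ex] | rewrite iter_shift, Ex]; auto.
Qed.

(* Blocks are intervals, since S is monotone on each branch. *)
Lemma block_convex w (X : R -> Prop) : valid_word k w -> convex X ->
  convex (phiset a b S w X).
Proof.
  induction w as [|i w IH]; intros Hv HX; simpl; auto.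
  inversion Hv as [|i' w' Hi Hw]; subst.
  intros x y z [Hx1 Hx2] [Hy1 Hy2] Hz. split; [apply (Ival_convex a b i x y z); auto|].
  apply (convex_between _ (S x) (S y)); auto.
  apply (S_between k a b c d Hcfg g Hg M eps alpha S Sd HA Heps i); auto.
Qed.

Lemma block_diameter w (X : R -> Prop) x y : valid_word k w ->
  (forall z, X z -> Lset c d z) -> phiset a b S w X x -> phiset a b S w X y ->
  Rabs (x - y) * exp (INR (length w) * (kappa c d g / 2)) <= 1.
Proof.
  intros Hv HX Hx Hy.
  eapply Rle_trans; [eapply S_iter_expands; eauto; eapply block_same_branch; eauto|].
  destruct (block_itinerary k a b S w X x Hv Hx) as [_ Lx].
  destruct (block_itinerary k a b S w X y Hv Hy) as [_ Ly].
  apply HX in Lx. apply HX in Ly.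
  destruct Hcfg as [_ [Hc0 [Hd1 _]]]. unfold Lset in *. apply Rabs_le; lra.
Qed.

Lemma block_iter_deriv w (X : R -> Prop) : valid_word k w ->
  forall x, phiset a b S w X x ->
    has_deriv_within (phiset a b S w X) (iterR (length w) S) x
      (deriv_iter S Sd (length w) x) /\
    deriv_iter S Sd (length w) x <> 0 /\
    ln (Rabs (deriv_iter S Sd (length w) x)) = log_deriv_sum S Sd (length w) x.
Proof.
  intros Hv x Hx.
  assert (HI : forall n y, (n < length w)%nat -> phiset a b S w X y ->
                 Iset k a b (iterR n S y)).
  { intros n y Hn Hy. destruct (block_itinerary k a b S w X y Hv Hy) as [Iy _].
    exists (nth n w 0%nat). apply Iy; auto. }
  split; [|apply deriv_iter_log; intros n Hn;
           apply (S_deriv_ne0 k a b c d M eps alpha S Sd HA); auto].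
  rewrite <- (Rmult_1_r (deriv_iter S Sd (length w) x)).
  apply (iter_deriv_within k a b c d Hcfg g Hg M eps alpha S Sd HA
           (length w) _ (fun y => y) (fun _ => 1)); auto.
  intros y _. apply deriv_within_of_lim, derivable_pt_lim_id.
Qed.

(* A continuous image of a convex set that lies in I cannot cross a gap, so
   it lies in a single interval I_j. *)
Lemma cont_image_same_branch (A : R -> Prop) h x y : convex A -> A x -> A y ->
  (forall t, A t -> cont_within A h t) -> (forall t, A t -> Iset k a b (h t)) ->
  same_branch k a b (h x) (h y).
Proof.
  intros Hc Ax Ay Hcont HI.
  destruct Hcfg as [Hk [_ [_ [_ [_ [Hab Hba]]]]]].
  assert (Hcross : forall p q i j, A p -> A q -> (1 <= i)%nat -> (i < j)%nat ->
            (j <= k)%nat -> Ival a b i (h p) -> Ival a b j (h q) -> False).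
  { intros p q i j Ap Aq Hi Hij Hjk Hp Hq.
    set (v := (b i + a (i + 1)%nat) / 2).
    assert (Hba' := Hba i ltac:(lia)).
    assert (a (i + 1)%nat <= a j).
    { destruct (Nat.eq_dec j (i + 1)) as [->|Hne]; [lra|].
      pose proof (gap_ordered k a b c d Hcfg g Hg (i + 1) j ltac:(lia) ltac:(lia) Hjk).
      pose proof (Hab (i + 1)%nat ltac:(lia)). destruct Hg; lra. }
    unfold Ival in *.
    destruct (IVT_within A h p q v Hc Ap Aq Hcont) as [z [_ [Az Ez]]].
    { unfold v, Rmin, Rmax; destruct Rle_dec; lra. }
    apply (Jgap_not_I k a b c d Hcfg g Hg i v ltac:(lia)); [unfold Jgap, v; lra|].
    rewrite <- Ez. auto. }
  destruct (HI x Ax) as [i [Hi Hxi]]. destruct (HI y Ay) as [j [Hj Hyj]].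
  destruct (Nat.lt_total i j) as [H|[H|H]].
  - exfalso. apply (Hcross x y i j); auto; lia.
  - subst. exists j; auto.
  - exfalso. apply (Hcross y x j i); auto; lia.
Qed.

End Blocks.

(* The circle map f = frac o F on a convex set whose image stays below d < 1:
   there F does not cross an integer, so f = F - n for a fixed integer n. *)

Lemma frac_part_shift z f0 : 0 <= f0 < 1 -> frac_part (IZR z + f0) = f0.
Proof.
  intros H. destruct (Int_part_frac_part_spec (IZR z + f0) z f0 H eq_refl) as [_ E]. auto.
Qed.

Lemma int_part_constant (A : R -> Prop) F (d : R) : convex A -> continuity F -> d < 1 ->
  (forall x, A x -> frac_part (F x) <= d) ->
  forall x y, A x -> A y -> Int_part (F x) = Int_part (F y).
Proof.
  intros Hc HF Hd Hfr.
  assert (Hgen : forall x y, A x -> A y -> (Int_part (F x) < Int_part (F y))%Z -> False).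
  { intros x y Ax Ay Hlt.
    set (N := (Int_part (F x) + 1)%Z).
    assert (Hd0 : 0 <= d) by (pose proof (Hfr x Ax); pose proof (base_fp (F x)); lra).
    assert (HxN : F x <= IZR N - 1 + d).
    { pose proof (Hfr x Ax). unfold frac_part in *. unfold N. rewrite plus_IZR. lra. }
    assert (HyN : IZR N <= F y).
    { pose proof (base_Int_part (F y)) as [H _].
      assert (Hz : (N <= Int_part (F y))%Z) by (unfold N; lia).
      apply IZR_le in Hz. lra. }
    set (v := IZR N - (1 - d) / 2).
    destruct (IVT_within A F x y v Hc Ax Ay) as [z [_ [Az Ez]]].
    { intros t _. apply cont_within_of_pt, HF. }
    { unfold v, Rmin, Rmax; destruct Rle_dec; lra. }
    pose proof (Hfr z Az) as Hz. rewrite Ez in Hz.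
    replace v with (IZR (N - 1) + (1 + d) / 2) in Hz by (unfold v; rewrite minus_IZR; field).
    rewrite frac_part_shift in Hz by lra. lra. }
  intros x y Ax Ay.
  destruct (Z.lt_total (Int_part (F x)) (Int_part (F y))) as [H|[H|H]]; auto;
    exfalso; [apply (Hgen x y) | apply (Hgen y x)]; auto.
Qed.

Lemma log_deriv_uniform Fd e : continuity Fd -> (forall x, Fd x <> 0) -> 0 < e ->
  exists del, 0 < del /\ forall x y, 0 <= x <= 1 -> 0 <= y <= 1 -> Rabs (x - y) < del ->
    Rabs (ln (Rabs (Fd x)) - ln (Rabs (Fd y))) < e.
Proof.
  intros Hc Hnz He.
  assert (Hu : uniform_continuity (fun x => ln (Rabs (Fd x))) (fun x => 0 <= x <= 1)).
  { apply Heine; [apply compact_P3|]. intros x _.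
    apply (continuity_pt_comp (fun x => Rabs (Fd x)) ln).
    - apply (continuity_pt_comp Fd Rabs); [apply Hc | apply Rcontinuity_abs].
    - apply derivable_continuous_pt. exists (/ Rabs (Fd x)). apply derivable_pt_lim_ln.
      apply Rabs_pos_lt; auto. }
  destruct (Hu (mkposreal e He)) as [del Hd]. exists del. split; [apply cond_pos|].
  intros x y Hx Hy Hxy. apply (Hd x y Hx Hy Hxy).
Qed.

Definition return_deriv (S Sd F Fd : R -> R) (u : nat) (x : R) : R :=
  deriv_iter S Sd u (circ_map F x) * Fd x.

(* The constant comparing |g_T'| with |(S^|w|)'|: distortion of g_T times
   distortion of S^|w|. *)
Definition return_constant (alpha c d g M eta : R) : R :=
  exp (3 * eta / 4) * exp (M / (1 - theta alpha c d g)).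

Section FirstReturn.

Variables (k : nat) (a b : nat -> R) (c d : R).
Hypothesis Hcfg : interval_config k a b c d.
Variable g : R.
Hypothesis Hg : gap_bound k a b g.
Variables (M eps alpha : R) (S Sd : R -> R).
Hypothesis HA : in_class_A k a b c d M eps alpha S Sd.
Hypothesis Heps : eps <= kappa c d g / 2.
Variables F Fd : R -> R.
Hypothesis Hlift : circle_diffeo_lift F Fd.
Variables (w : list nat) (u : nat).
Hypothesis Hw : valid_word k w.
Hypothesis Hu : uT_cond k a b S (circ_map F) (phiset a b S w (Lset c d)) u.

Local Notation T := (phiset a b S w (Lset c d)).

Lemma block_L_convex : convex T.
Proof.
  apply (block_convex k a b c d Hcfg g Hg M eps alpha S Sd HA Heps); auto.
  apply Lset_convex.
Qed.

Lemma block_L_in_L x : T x -> Lset c d x.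
Proof. apply (block_in_L k a b c d Hcfg g Hg S w); auto. Qed.

(* On T the circle map is F - n0 for one integer n0, since f(T) lies in I. *)
Lemma circ_map_on_block : exists n0 : Z, forall x, T x -> circ_map F x = F x - IZR n0.
Proof.
  pose proof Hcfg as [_ [_ [Hd1 _]]].
  pose proof (L_nondegenerate k a b c d Hcfg g Hg).
  destruct (block_onto k a b c d Hcfg g Hg M eps alpha S Sd HA w (Lset c d) Hw
              ltac:(auto) c ltac:(unfold Lset; lra)) as [x0 [Tx0 _]].
  destruct Hlift as [HFd _].
  assert (HFc : continuity F)
    by (intros x; apply derivable_continuous_pt; exists (Fd x); apply HFd).
  exists (Int_part (F x0)). intros x Tx. unfold circ_map, frac_part.
  rewrite (int_part_constant T F d block_L_convex HFc Hd1) with (y := x0); auto.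
  intros y Ty. destruct Hu as [_ Hu']. pose proof (Hu' y Ty 0%nat ltac:(lia)) as Hy0.
  apply (Iset_L k a b c d Hcfg g Hg) in Hy0. simpl in Hy0. unfold circ_map, Lset in *. lra.
Qed.

Lemma return_iter_deriv N : (N <= u)%nat -> forall x, T x ->
  has_deriv_within T (fun y => iterR N S (circ_map F y)) x
    (deriv_iter S Sd N (circ_map F x) * Fd x).
Proof.
  intros HN x Tx. destruct circ_map_on_block as [n0 Hn0]. destruct Hlift as [HFd _].
  rewrite (Hn0 x Tx).
  apply deriv_within_ext with (fun y => iterR N S (F y - IZR n0));
    [intros y Ty; rewrite Hn0; auto | auto |].
  apply (iter_deriv_within k a b c d Hcfg g Hg M eps alpha S Sd HA N T
           (fun y => F y - IZR n0) Fd); auto.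
  - intros y _. apply deriv_within_of_lim.
    replace (Fd y) with (Fd y - 0) by ring.
    apply (derivable_pt_lim_minus F (fct_cte (IZR n0))); [auto | apply derivable_pt_lim_const].
  - intros n y Hn Ty. rewrite <- (Hn0 y Ty). destruct Hu as [_ Hu']. apply Hu'; auto. lia.
Qed.

Lemma return_orbit_same_branch x y : T x -> T y ->
  forall n, (n < u)%nat ->
  same_branch k a b (iterR n S (circ_map F x)) (iterR n S (circ_map F y)).
Proof.
  intros Tx Ty n Hn.
  apply (cont_image_same_branch k a b c d Hcfg g Hg T
           (fun t => iterR n S (circ_map F t)) x y block_L_convex); auto.
  - intros t Tt. eapply deriv_within_cont, return_iter_deriv; auto. lia.
  - intros t Tt. destruct Hu as [_ Hu']. apply Hu'; auto. lia.
Qed.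

Lemma return_deriv_spec x : T x ->
  has_deriv_within T (gT S (circ_map F) u) x (return_deriv S Sd F Fd u x) /\
  return_deriv S Sd F Fd u x <> 0 /\
  ln (Rabs (return_deriv S Sd F Fd u x))
    = log_deriv_sum S Sd u (circ_map F x) + ln (Rabs (Fd x)).
Proof.
  intros Tx. destruct Hlift as [_ [_ [HFnz _]]].
  destruct (deriv_iter_log S Sd u (circ_map F x)) as [Hne Hln].
  { intros n Hn. apply (S_deriv_ne0 k a b c d M eps alpha S Sd HA).
    destruct Hu as [_ Hu']. apply Hu'; auto. lia. }
  unfold return_deriv. split; [|split].
  - apply return_iter_deriv; auto.
  - apply Rmult_integral_contrapositive. auto.
  - rewrite Rabs_mult, ln_mult, Hln by (apply Rabs_pos_lt; auto). auto.
Qed.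

Lemma return_maps_into_L x : T x -> Lset c d (gT S (circ_map F) u x).
Proof.
  intros Tx. destruct Hu as [Hu1 Hu2].
  destruct (Hu2 x Tx (u - 1)%nat ltac:(lia)) as [j [Hj Hx]].
  unfold gT. replace u with (Datatypes.S (u - 1)) by lia. simpl.
  destruct HA as [HS _]. destruct (HS j Hj) as [_ [_ [Hmap _]]]. auto.
Qed.

Lemma extended_block_images_close i v x1 x2 : (1 <= i <= k - 1)%nat -> valid_word k v ->
  phiset a b S (w ++ v) (Jgap a b i) x1 -> phiset a b S (w ++ v) (Jgap a b i) x2 ->
  T x1 /\ T x2 /\
  Rabs (iterR (length w) S x1 - iterR (length w) S x2)
    * exp (INR (length v) * (kappa c d g / 2)) <= 1.
Proof.
  intros Hi Hv G1 G2. apply phiset_app in G1. apply phiset_app in G2.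
  assert (HJ : forall y, Jgap a b i y -> Lset c d y)
    by (intros y; apply (Jgap_L k a b c d Hcfg g Hg i y Hi)).
  assert (Hsub : forall y, phiset a b S v (Jgap a b i) y -> Lset c d y)
    by (intros y; apply (block_in_L k a b c d Hcfg g Hg S v (Jgap a b i) y Hv HJ)).
  split; [apply (phiset_mono a b S w _ _ x1 Hsub G1)|].
  split; [apply (phiset_mono a b S w _ _ x2 Hsub G2)|].
  destruct (block_itinerary k a b S w _ x1 Hw G1) as [_ Z1].
  destruct (block_itinerary k a b S w _ x2 Hw G2) as [_ Z2].
  apply (block_diameter k a b c d Hcfg g Hg M eps alpha S Sd HA Heps v (Jgap a b i)); auto.
Qed.

(* S^|w| maps T onto L while g_T maps T into L, so by the mean value theorem
   some |g_T'| on T is at most some |(S^|w|)'| on T. *)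
Lemma return_deriv_le_somewhere : exists th xi, T th /\ T xi /\
  Rabs (return_deriv S Sd F Fd u th) <= Rabs (deriv_iter S Sd (length w) xi).
Proof.
  pose proof (L_nondegenerate k a b c d Hcfg g Hg).
  pose proof (block_iter_deriv k a b c d Hcfg g Hg M eps alpha S Sd HA w (Lset c d) Hw) as HD.
  destruct (block_onto k a b c d Hcfg g Hg M eps alpha S Sd HA w (Lset c d) Hw
              ltac:(auto) c ltac:(unfold Lset; lra)) as [t1 [Tt1 Et1]].
  destruct (block_onto k a b c d Hcfg g Hg M eps alpha S Sd HA w (Lset c d) Hw
              ltac:(auto) d ltac:(unfold Lset; lra)) as [t2 [Tt2 Et2]].
  destruct (MVT_within T _ _ t1 t2 block_L_convex Tt1 Tt2 (fun x Tx => proj1 (HD x Tx)))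
    as [xi [_ [Txi Exi]]].
  destruct (MVT_within T _ _ t1 t2 block_L_convex Tt1 Tt2
              (fun x Tx => proj1 (return_deriv_spec x Tx))) as [th [_ [Tth Eth]]].
  rewrite Et1, Et2 in Exi.
  exists th, xi. split; [auto | split; [auto|]].
  assert (Ht12 : 0 < Rabs (t2 - t1)).
  { apply Rabs_pos_lt. intros E. rewrite E, Rmult_0_r in Exi. lra. }
  apply Rmult_le_reg_r with (Rabs (t2 - t1)); auto.
  rewrite <- !Rabs_mult, <- Eth, <- Exi.
  pose proof (return_maps_into_L t1 Tt1). pose proof (return_maps_into_L t2 Tt2).
  unfold Lset in *. rewrite (Rabs_right (d - c)) by lra. apply Rabs_le; lra.
Qed.

Variables (eta del : R).
Hypotheses (Halpha : 0 < alpha) (HM : 0 < M) (Heps0 : 0 < eps) (Heta : 0 < eta).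
Hypothesis Hsmall : sqrt (eps * M) / (1 - theta alpha c d g) <= eta / 2.
Hypothesis Hdel : forall x y, 0 <= x <= 1 -> 0 <= y <= 1 -> Rabs (x - y) < del ->
  Rabs (ln (Rabs (Fd x)) - ln (Rabs (Fd y))) < eta / 4.
Hypothesis Hlong : 1 < del * exp (INR (length w) * (kappa c d g / 2)).

(* On a long block, S^u contributes distortion <= eta/2 (eps is small) and f
   contributes < eta/4 (T is shorter than the modulus del). *)
Lemma return_distortion x y : T x -> T y ->
  ln (Rabs (return_deriv S Sd F Fd u x) / Rabs (return_deriv S Sd F Fd u y)) <= 3 * eta / 4.
Proof.
  intros Tx Ty.
  destruct (return_deriv_spec x Tx) as [_ [Hx1 Hx2]].
  destruct (return_deriv_spec y Ty) as [_ [Hy1 Hy2]].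
  rewrite ln_div, Hx2, Hy2 by (apply Rabs_pos_lt; auto).
  assert (HS : Rabs (log_deriv_sum S Sd u (circ_map F x) - log_deriv_sum S Sd u (circ_map F y))
                 <= eta / 2).
  { eapply Rle_trans; [|apply Hsmall].
    apply (distortion_small k a b c d Hcfg g Hg M eps alpha S Sd HA Heps); auto.
    apply return_orbit_same_branch; auto. }
  assert (HF : Rabs (ln (Rabs (Fd x)) - ln (Rabs (Fd y))) < eta / 4).
  { pose proof (block_L_in_L x Tx). pose proof (block_L_in_L y Ty).
    destruct Hcfg as [_ [Hc0 [Hd1 _]]]. unfold Lset in *.
    apply Hdel; try lra.
    pose proof (block_diameter k a b c d Hcfg g Hg M eps alpha S Sd HA Heps w (Lset c d) x y
                  Hw ltac:(auto) Tx Ty).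
    pose proof (exp_pos (INR (length w) * (kappa c d g / 2))).
    assert (0 < del) by (destruct (Rle_dec del 0); [nra | lra]).
    nra. }
  apply Rabs_def2 in HF. unfold Rabs in HS; destruct Rcase_abs in HS; lra.
Qed.

Lemma return_nonlinearity_small : N_map_lt T (gT S (circ_map F) u) eta.
Proof.
  exists (return_deriv S Sd F Fd u). split.
  - intros x Tx. destruct (return_deriv_spec x Tx) as [H1 [H2 _]]. auto.
  - exists (3 * eta / 4). split; [lra | exact return_distortion].
Qed.

(* By the distortion bounds for g_T and for S^|w|, every |g_T'| on T is at
   most return_constant times every |(S^|w|)'| on T. *)
Lemma return_deriv_le_block_deriv t z : T t -> T z ->
  Rabs (return_deriv S Sd F Fd u t)
    <= return_constant alpha c d g M eta * Rabs (deriv_iter S Sd (length w) z).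
Proof.
  intros Tt Tz. destruct return_deriv_le_somewhere as [th [xi [Tth [Txi Hcmp]]]].
  pose proof (block_iter_deriv k a b c d Hcfg g Hg M eps alpha S Sd HA w (Lset c d) Hw) as HD.
  destruct (HD xi Txi) as [_ [Hxi Lxi]]. destruct (HD z Tz) as [_ [Hz Lz]].
  destruct (return_deriv_spec th Tth) as [_ [Hth _]].
  destruct (return_deriv_spec t Tt) as [_ [Ht _]].
  assert (Hg_dist : Rabs (return_deriv S Sd F Fd u t)
                      <= exp (3 * eta / 4) * Rabs (return_deriv S Sd F Fd u th)).
  { apply le_exp_mul_of_ln; try (apply Rabs_pos_lt; auto).
    rewrite <- ln_div by (apply Rabs_pos_lt; auto). apply return_distortion; auto. }
  assert (HS_dist : Rabs (deriv_iter S Sd (length w) xi)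
                      <= exp (M / (1 - theta alpha c d g)) * Rabs (deriv_iter S Sd (length w) z)).
  { apply le_exp_mul_of_ln; try (apply Rabs_pos_lt; auto). rewrite Lxi, Lz.
    eapply Rle_trans; [apply Rle_abs|].
    apply (distortion_M k a b c d Hcfg g Hg M eps alpha S Sd HA Heps); auto.
    apply (block_same_branch k a b S w (Lset c d)); auto. }
  unfold return_constant. pose proof (exp_pos (3 * eta / 4)).
  eapply Rle_trans; [apply Hg_dist|]. rewrite Rmult_assoc.
  apply Rmult_le_compat_l; lra.
Qed.

(* If g_T maps the gap phi(w v)(J_i) onto J_j (of length at least g), then
   S^|w| maps two points of it with g_T-images h/2 apart into phi(v)(J_i),
   of length at most e^(-|v| kappa/2): so |v| is bounded. *)
Lemma gap_return_bound i j v : (1 <= i <= k - 1)%nat -> (1 <= j <= k - 1)%nat ->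
  valid_word k v ->
  maps_onto (gT S (circ_map F) u) (phiset a b S (w ++ v) (Jgap a b i)) (Jgap a b j) ->
  g / 2 * exp (INR (length v) * (kappa c d g / 2)) <= return_constant alpha c d g M eta.
Proof.
  intros Hi Hj Hv [_ Honto]. pose proof Hcfg as [Hk _].
  set (h := a (j + 1)%nat - b j).
  assert (Hh : g <= h) by (destruct Hg as [Hg0 Hgj]; specialize (Hgj j ltac:(lia)); unfold h; lra).
  assert (Hg0 : 0 < g) by (destruct Hg; auto).
  assert (Eh : a (j + 1)%nat = b j + h) by (unfold h; ring).
  destruct (Honto (b j + h / 4)) as [x1 [G1 E1]]; [unfold Jgap; lra|].
  destruct (Honto (b j + 3 * h / 4)) as [x2 [G2 E2]]; [unfold Jgap; lra|].
  destruct (extended_block_images_close i v x1 x2 Hi Hv G1 G2) as [T1 [T2 Hshort]].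
  pose proof (block_iter_deriv k a b c d Hcfg g Hg M eps alpha S Sd HA w (Lset c d) Hw) as HD.
  destruct (MVT_within T _ _ x1 x2 block_L_convex T1 T2 (fun x Tx => proj1 (HD x Tx)))
    as [zeta [_ [Tz Ez]]].
  destruct (MVT_within T _ _ x1 x2 block_L_convex T1 T2
              (fun x Tx => proj1 (return_deriv_spec x Tx))) as [th [_ [Tth Eth]]].
  rewrite E1, E2 in Eth.
  pose proof (return_deriv_le_block_deriv th zeta Tth Tz) as Hcmp.
  assert (Hh2 : h / 2 <= return_constant alpha c d g M eta
                  * Rabs (iterR (length w) S x1 - iterR (length w) S x2)).
  { rewrite Rabs_minus_sym, Ez, Rabs_mult, <- Rmult_assoc.
    replace (h / 2) with (Rabs (return_deriv S Sd F Fd u th) * Rabs (x2 - x1))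
      by (rewrite <- Rabs_mult, <- Eth, Rabs_right; lra).
    apply Rmult_le_compat_r; [apply Rabs_pos | auto]. }
  pose proof (exp_pos (INR (length v) * (kappa c d g / 2))).
  assert (0 <= return_constant alpha c d g M eta)
    by (unfold return_constant; left; apply Rmult_lt_0_compat; apply exp_pos).
  pose proof (Rabs_pos (iterR (length w) S x1 - iterR (length w) S x2)).
  nra.
Qed.

End FirstReturn.

Lemma small_eps_exists K M t e : 0 < K -> 0 < M -> 0 <= t < 1 -> 0 < e ->
  exists eps, 0 < eps /\ eps <= K /\ sqrt (eps * M) / (1 - t) <= e.
Proof.
  intros HK HM Ht He. set (r := (e * (1 - t)) ^ 2 / M).
  assert (Hr : 0 < r) by (apply Rdiv_lt_0_compat; auto; apply pow_lt; nra).
  exists (Rmin K r). split; [apply Rmin_pos; auto | split; [apply Rmin_l|]].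
  assert (H1 : Rmin K r * M <= (e * (1 - t)) ^ 2).
  { replace ((e * (1 - t)) ^ 2) with (r * M) by (unfold r; field; lra).
    apply Rmult_le_compat_r; [lra | apply Rmin_r]. }
  apply sqrt_le_1_alt in H1. rewrite sqrt_pow2 in H1 by nra.
  apply Rmult_le_reg_r with (1 - t); [lra|].
  unfold Rdiv. rewrite Rmult_assoc, Rinv_l by lra. lra.
Qed.

Theorem mainTheorem5 (k : nat) (a b : nat -> R) (c d : R)
  (Hcfg : interval_config k a b c d)
  (alpha M eta : R) (Halpha : 0 < alpha) (HM : 0 < M) (Heta : 0 < eta < 1 / 2) :
  exists eps, 0 < eps /\ exists l : nat,
    forall S Sd : R -> R, in_class_A k a b c d M eps alpha S Sd ->
    forall F Fd : R -> R, circle_diffeo_lift F Fd ->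
    minimal_set (circ_map F) (C_S k a b S) ->
    exists m0 : nat,
      (forall w, valid_word k w -> (m0 < length w)%nat ->
         forall u, is_uT k a b S (circ_map F) (phiset a b S w (Lset c d)) u ->
         N_map_lt (phiset a b S w (Lset c d)) (gT S (circ_map F) u) eta) /\
      (forall w, valid_word k w -> (m0 < length w)%nat ->
         forall u, is_uT k a b S (circ_map F) (phiset a b S w (Lset c d)) u ->
         forall (i j : nat) (v : list nat),
           (1 <= i <= k - 1)%nat -> (1 <= j <= k - 1)%nat -> valid_word k v ->
           maps_onto (gT S (circ_map F) u) (phiset a b S (w ++ v) (Jgap a b i)) (Jgap a b j) ->
           (length v <= l)%nat).
Proof.
  destruct (gap_bound_exists k a b c d Hcfg) as [g Hg].
  pose proof (kappa_pos k a b c d Hcfg g Hg) as Hk.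
  pose proof (theta_bounds k a b c d Hcfg g Hg alpha Halpha) as Hth.
  destruct (small_eps_exists (kappa c d g / 2) M (theta alpha c d g) (eta / 2))
    as [eps [Heps0 [Heps Hsmall]]]; try lra.
  set (C := return_constant alpha c d g M eta).
  assert (HC : 0 < C) by (apply Rmult_lt_0_compat; apply exp_pos).
  destruct (exp_eventually_large (kappa c d g / 2) (g / (2 * C))) as [l Hl];
    [lra | destruct Hg; apply Rdiv_lt_0_compat; lra |].
  exists eps. split; auto. exists l.
  intros S Sd HA F Fd Hlift _.
  pose proof Hlift as [_ [HFc [HFnz _]]].
  destruct (log_deriv_uniform Fd (eta / 4) HFc HFnz ltac:(lra)) as [del [Hdel0 Hdel]].
  destruct (exp_eventually_large (kappa c d g / 2) del) as [m0 Hlong]; auto; [lra|].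
  exists m0. split.
  - intros w Hw Hm u [Hu _].
    apply (return_nonlinearity_small k a b c d Hcfg g Hg M eps alpha S Sd HA Heps
             F Fd Hlift w u Hw Hu eta del); auto; lra.
  - intros w Hw Hm u [Hu _] i j v Hi Hj Hv Honto.
    destruct (Compare_dec.le_lt_dec (length v) l) as [|Hlt]; auto. exfalso.
    pose proof (gap_return_bound k a b c d Hcfg g Hg M eps alpha S Sd HA Heps F Fd Hlift
                  w u Hw Hu eta del Halpha HM Heps0 Hsmall Hdel (Hlong _ Hm) i j v
                  Hi Hj Hv Honto) as Hbound.
    specialize (Hl _ Hlt). fold C in Hbound.
    replace (g / (2 * C) * exp (INR (length v) * (kappa c d g / 2)))
      with (g / 2 * exp (INR (length v) * (kappa c d g / 2)) / C) in Hl by (field; lra).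
    apply (Rmult_lt_compat_r C) in Hl; auto. unfold Rdiv in Hl.
    rewrite Rmult_assoc, Rinv_l in Hl by lra. lra.
Qed.
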